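(* (i) Let $S$ be a unital nonassociative ring with multiplication $\circ$ which has a field $K$ as a subring and is a free left $K$-vector space of dimension $m$. Suppose that: (1) there is $t\in S$ such that $t^i$, $0\le i<m$, is a basis of $S$ over $K$, where $t^0=1$ and $t^{i+1}=t\circ t^i$; (2) for all $a\in K$, $a\neq0$, there is $a'\in K^\times$ such that $t\circ a=a'\circ t$; (3) for all $a,b,c\in K$, $i+j<m$, $k<m$, we have $[a\circ t^i,b\circ t^j,c\circ t^k]=0$; (4) $t^m=d$ for some $d\in K^\times$; (5) the map $\sigma:K\to K$, $\sigma(a)=a'$ (with $\sigma(0)=0$), has order $m$ and fixed field $F=\{a\in K\mid t\circ a=a\circ t\}$ containing a primitive $m$th root of unity $\omega$, and $K/F$ is a finite cyclic Galois extension. Then $S\cong S_f=(K/F,\sigma,d)$ with $f(t)=t^m-d\in K[t;\sigma]$. (ii) If moreover $S$ is a right division ring, then $f$ is irreducible and $S\cong(K/F,\sigma,d)$ is a nonassociative cyclic extension of $K$ of degree $m$.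
   Context: $[x,y,z]=(x\circ y)\circ z-x\circ(y\circ z)$ is the associator. $K[t;\sigma]$ is the twisted polynomial ring (polynomials $\sum a_it^i$, multiplication determined by $ta=\sigma(a)t$); $(K/F,\sigma,d)=S_f$ is the set of polynomials of degree $<m$ with multiplication $g\circ h=$ remainder of $gh$ on right division by $f=t^m-d$. A nonassociative ring $S\neq0$ is a right division ring if right multiplication $x\mapsto x\circ a$ is bijective for every $a\ne0$. $f$ is irreducible if not a unit and not a product of two non-units. Definition: if $A$ is a nonassociative division algebra and $D\subseteq A$ an associative division subalgebra, $A$ is a nonassociative cyclic extension of $D$ of degree $m$ if $A$ is a free left $D$-module of rank $m$ and $\mathrm{Aut}(A)$ has a cyclic subgroup $G$ of order $m$ with $H|_D=\mathrm{id}_D$ for all $H\in G$. *)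

From HB Require Import structures.
From mathcomp Require Import all_boot all_order all_algebra all_fingroup all_solvable all_field.
Set Implicit Arguments.
Unset Strict Implicit.
Unset Printing Implicit Defensive.
Import GRing.Theory.
Local Open Scope ring_scope.

Definition naring (S : zmodType) (mul : S -> S -> S) (one : S) : Prop :=
  [/\ forall x y z, mul (x + y) z = mul x z + mul y z,
      forall x y z, mul x (y + z) = mul x y + mul x z,
      forall x, mul one x = x &
      forall x, mul x one = x].

Definition nassoc (S : zmodType) (mul : S -> S -> S) (x y z : S) : S :=
  mul (mul x y) z - mul x (mul y z).

Definition subring_embedding (K : fieldType) (S : zmodType)
    (mul : S -> S -> S) (one : S) (iota : K -> S) : Prop :=
  [/\ injective iota,
      forall a b, iota (a + b) = iota a + iota b,
      iota 1 = one &
      forall a b, iota (a * b) = mul (iota a) (iota b)].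

(** The left scalar action [a . x := iota a o x] makes [S] a left
    [K]-vector space (the remaining module axioms follow from [naring]
    and [subring_embedding]). *)
Definition left_K_space (K : fieldType) (S : zmodType)
    (mul : S -> S -> S) (iota : K -> S) : Prop :=
  forall a b x, mul (iota (a * b)) x = mul (iota a) (mul (iota b) x).

Definition is_Kbasis (K : fieldType) (S : zmodType) (mul : S -> S -> S)
    (iota : K -> S) (m : nat) (b : 'I_m -> S) : Prop :=
  forall x : S, exists! c : {ffun 'I_m -> K},
    x = \sum_(i < m) mul (iota (c i)) (b i).

Definition free_of_rank (K : fieldType) (S : zmodType) (mul : S -> S -> S)
    (iota : K -> S) (m : nat) : Prop :=
  exists b : 'I_m -> S, is_Kbasis mul iota b.

Definition tpow (S : Type) (mul : S -> S -> S) (one t : S) (n : nat) : S :=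
  iter n (mul t) one.

(** * The twisted polynomial ring K[t;sigma]
    Elements are polynomials [sum a_i t^i] (carried by [{poly K}]) with
    multiplication determined by [t a = sigma(a) t], i.e.
    (a t^i)(b t^j) = a sigma^i(b) t^(i+j). *)
Definition skew_mul (K : fieldType) (sigma : K -> K) (p q : {poly K}) : {poly K} :=
  \poly_(k < (size p + size q).-1)
     \sum_(i < k.+1) p`_i * iter i sigma (q`_(k - i)).

Definition skew_unit (K : fieldType) (sigma : K -> K) (p : {poly K}) : Prop :=
  exists q, skew_mul sigma p q = 1 /\ skew_mul sigma q p = 1.

Definition skew_irreducible (K : fieldType) (sigma : K -> K) (f : {poly K}) : Prop :=
  ~ skew_unit sigma f /\
  forall g h, f = skew_mul sigma g h -> skew_unit sigma g \/ skew_unit sigma h.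

Definition is_rrem (K : fieldType) (sigma : K -> K) (f g r : {poly K}) : Prop :=
  (size r < size f)%N /\ exists q, g = skew_mul sigma q f + r.

(** [phi] is an isomorphism of unital nonassociative rings from [S] onto
    S_f = (K/F,sigma,d), the set of polynomials of degree < m (size <= m)
    with multiplication g o h = remainder of gh on right division by f. *)
Definition iso_to_Sf (K : fieldType) (sigma : K -> K) (m : nat) (f : {poly K})
    (S : zmodType) (mul : S -> S -> S) (one : S) (phi : S -> {poly K}) : Prop :=
  [/\ forall x, (size (phi x) <= m)%N,
      injective phi,
      (forall p : {poly K}, (size p <= m)%N -> exists x, phi x = p),
      forall x y, phi (x + y) = phi x + phi y &
      phi one = 1 /\
      forall x y, is_rrem sigma f (skew_mul sigma (phi x) (phi y)) (phi (mul x y))].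

Definition right_division_ring (S : zmodType) (mul : S -> S -> S) : Prop :=
  (exists x : S, x != 0) /\
  forall a : S, a != 0 -> bijective (fun x => mul x a).

Definition na_automorphism (S : zmodType) (mul : S -> S -> S) (one : S)
    (H : S -> S) : Prop :=
  [/\ bijective H,
      forall x y, H (x + y) = H x + H y,
      forall x y, H (mul x y) = mul (H x) (H y) &
      H one = one].

(** Nonassociative cyclic extension of degree [m] of the associative division
    subalgebra D = iota(K) (K a field):
    A is a nonassociative division algebra, a free left D-module of rank m,
    and Aut(A) has a cyclic subgroup G of order m all of whose elements
    restrict to the identity on D (G is given by a generator H). *)
Definition na_cyclic_extension (K : fieldType) (S : zmodType)
    (mul : S -> S -> S) (one : S) (iota : K -> S) (m : nat) : Prop :=
  [/\ (exists x : S, x != 0),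
      (forall a : S, a != 0 ->
         bijective (fun x => mul a x) /\ bijective (fun x => mul x a)),
      free_of_rank mul iota m &
      exists H : S -> S,
        [/\ na_automorphism mul one H,
            forall a, H (iota a) = iota a,
            forall x, iter m H x = x &
            forall k, (0 < k < m)%N -> exists x, iter k H x != x]].

From HB Require Import structures.
From mathcomp Require Import all_boot all_order all_algebra all_fingroup all_solvable all_field.
From mathcomp Require Import zify.
Import GRing.Theory.
Local Open Scope ring_scope.
Set Implicit Arguments.
Unset Strict Implicit.

(* Write x in S as sum_i x_i t^i and read its coordinates as a polynomial of
   degree < m. Comparing coefficients of t in t a = sigma(a) t shows that sigma
   is a ring endomorphism of K, and associativity (3) gives
   (a t^i)(b t^j) = a sigma^i(b) t^(i+j), where t^(k+m) = sigma^k(d) t^k for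
   k < m. By biadditivity the coordinate map therefore sends products of S to
   remainders of twisted products modulo f = t^m - d, so S is isomorphic to S_f.
   A factorisation of f into factors of degree in [1, m) would give zero
   divisors in S_f, hence f is irreducible when S is a right division ring.
   Left multiplication by a nonzero element is then injective and linear over
   the fixed field F, hence bijective on the finite-dimensional F-space S;
   finally sum_i x_i t^i |-> sum_i omega^i x_i t^i is an automorphism of order
   m fixing K, since omega lies in F and omega^m = 1. *)

Section IterRMorphism.
Variables (K : fieldType) (sigma : {rmorphism K -> K}).

Lemma iter_rmorph0 i : iter i sigma 0 = 0.
Proof. by elim: i => // i IH; rewrite iterS IH rmorph0. Qed.

Lemma iter_rmorph1 i : iter i sigma 1 = 1.
Proof. by elim: i => // i IH; rewrite iterS IH rmorph1. Qed.

Lemma iter_rmorphD i : {morph iter i sigma : a b / a + b}.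
Proof. by elim: i => // i IH a b; rewrite !iterS IH rmorphD. Qed.

Lemma iter_rmorphN i : {morph iter i sigma : a / - a}.
Proof. by elim: i => // i IH a; rewrite !iterS IH rmorphN. Qed.

Lemma iter_rmorphM i : {morph iter i sigma : a b / a * b}.
Proof. by elim: i => // i IH a b; rewrite !iterS IH rmorphM. Qed.

Lemma iter_rmorph_eq0 i a : (iter i sigma a == 0) = (a == 0).
Proof. by elim: i => // i IH; rewrite iterS fmorph_eq0. Qed.

Lemma iter_rmorph_fix i a : sigma a = a -> iter i sigma a = a.
Proof. by move=> fix_a; elim: i => // i IH; rewrite iterS IH. Qed.

End IterRMorphism.

Section SkewRemainder.
Variables (K : fieldType) (sigma : K -> K) (m : nat) (d : K).

(* The remainder of P on right division by t^m - d in K[t; sigma], valid only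
   when size P <= m + m (see skew_rmodP). *)
Definition skew_rmod (P : {poly K}) : {poly K} :=
  \poly_(n < m) (P`_n + P`_(n + m) * iter n sigma d).

Lemma skew_rmodD (P Q : {poly K}) : skew_rmod (P + Q) = skew_rmod P + skew_rmod Q.
Proof.
apply/polyP => n; rewrite coefD !coef_poly; case: ltnP; rewrite ?addr0 // => _.
by rewrite !coefD mulrDl addrACA.
Qed.

Lemma skew_rmodZXn c n : (n < m)%N -> skew_rmod (c *: 'X^n) = c *: 'X^n.
Proof.
move=> ltnm; apply/polyP => k; rewrite coef_poly !coefZ !coefXn.
case: ltnP => [ltkm|lemk].
  by rewrite (_ : k + m == n = false) ?mulr0 ?mul0r ?addr0 //; apply/negbTE/eqP; lia.
by rewrite (_ : k == n = false) ?mulr0 //; apply/negbTE/eqP; lia.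
Qed.

Lemma skew_rmodZXnm c n : (n < m)%N ->
  skew_rmod (c *: 'X^(n + m)) = (c * iter n sigma d) *: 'X^n.
Proof.
move=> ltnm; apply/polyP => k; rewrite coef_poly !coefZ !coefXn eqn_add2r.
case: ltnP => [ltkm|lemk].
  rewrite (_ : k == n + m = false) ?mulr0 ?add0r; last by apply/negbTE/eqP; lia.
  by case: eqP => [->|_]; rewrite ?mulr1 ?mulr0 ?mul0r.
by rewrite (_ : k == n = false) ?mulr0 //; apply/negbTE/eqP; lia.
Qed.

Lemma skew_rmod_XnsubC : (0 < m)%N -> skew_rmod ('X^m - d%:P) = 0.
Proof.
move=> m_gt0; have -> : 'X^m - d%:P = 1 *: 'X^(0 + m) + (- d) *: 'X^0.
  by rewrite scale1r add0n expr0 scaleNr alg_polyC.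
by rewrite skew_rmodD skew_rmodZXnm // skew_rmodZXn // mul1r scaleNr addrN.
Qed.

End SkewRemainder.

Section TwistedPolynomials.
Variables (K : fieldType) (sigma : {rmorphism K -> K}).
Local Notation s i := (iter i sigma).

Lemma coef_skew_mul p q k :
  (skew_mul sigma p q)`_k = \sum_(i < k.+1) p`_i * s i q`_(k - i).
Proof.
rewrite coef_poly; case: ltnP => // k_big; symmetry; apply: big1 => i _.
case: (ltnP i (size p)) => [ltip|leip]; last by rewrite nth_default // mul0r.
by rewrite (@nth_default _ _ q) ?iter_rmorph0 ?mulr0 //; have := ltn_ord i; lia.
Qed.

Lemma skew_mulDl p p' q :
  skew_mul sigma (p + p') q = skew_mul sigma p q + skew_mul sigma p' q.
Proof.
apply/polyP => k; rewrite coefD !coef_skew_mul -big_split.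
by apply: eq_bigr => i _; rewrite coefD mulrDl.
Qed.

Lemma skew_mulDr p q q' :
  skew_mul sigma p (q + q') = skew_mul sigma p q + skew_mul sigma p q'.
Proof.
apply/polyP => k; rewrite coefD !coef_skew_mul -big_split.
by apply: eq_bigr => i _; rewrite coefD iter_rmorphD mulrDr.
Qed.

Lemma skew_mulNr p q : skew_mul sigma p (- q) = - skew_mul sigma p q.
Proof.
apply/polyP => k; rewrite coefN !coef_skew_mul -sumrN.
by apply: eq_bigr => i _; rewrite coefN iter_rmorphN mulrN.
Qed.

Lemma skew_mul0l q : skew_mul sigma 0 q = 0.
Proof.
by apply/polyP => k; rewrite coef_skew_mul coef0 big1 // => i _; rewrite coef0 mul0r.
Qed.

Lemma skew_mul0r p : skew_mul sigma p 0 = 0.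
Proof.
apply/polyP => k; rewrite coef_skew_mul coef0 big1 // => i _.
by rewrite coef0 iter_rmorph0 mulr0.
Qed.

Lemma coef_skew_mulZXn p c j n :
  (skew_mul sigma p (c *: 'X^j))`_n =
    if (j <= n)%N then p`_(n - j) * s (n - j) c else 0.
Proof.
have coefZXn i : (c *: 'X^j)`_i = if i == j then c else 0.
  by rewrite coefZ coefXn; case: eqP; rewrite ?mulr1 ?mulr0.
rewrite coef_skew_mul; case: ifP => [lejn|ltnj]; last first.
  by apply: big1 => i _; rewrite coefZXn ifN ?iter_rmorph0 ?mulr0 //; apply/eqP; lia.
have ltnjn : (n - j < n.+1)%N by lia.
rewrite (bigD1 (Ordinal ltnjn)) //= coefZXn ifT; last by apply/eqP; lia.
rewrite big1 ?addr0 // => i /eqP neq_i; rewrite coefZXn ifN ?iter_rmorph0 ?mulr0 //.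
by apply/eqP => eq_i; apply: neq_i; apply: val_inj => /=; have := ltn_ord i; lia.
Qed.

Lemma skew_mulZXn a b i j :
  skew_mul sigma (a *: 'X^i) (b *: 'X^j) = (a * s i b) *: 'X^(i + j).
Proof.
apply/polyP => n; rewrite coef_skew_mulZXn !coefZ !coefXn.
case: leqP => [lejn|ltnj].
  have -> : (n == i + j)%N = (n - j == i)%N by apply/eqP/eqP; lia.
  by case: eqP => [->|_]; rewrite ?mulr1 ?mulr0 ?mul0r.
by rewrite (_ : n == i + j = false) ?mulr0 //; apply/negbTE/eqP; lia.
Qed.

Lemma skew_mulC a b : skew_mul sigma a%:P b%:P = (a * b)%:P.
Proof. by have := skew_mulZXn a b 0 0; rewrite expr0 !alg_polyC. Qed.

Lemma size_skew_mul p q : p != 0 -> q != 0 ->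
  size (skew_mul sigma p q) = (size p + size q).-1.
Proof.
move=> p0 q0; apply: size_poly_eq.
have := size_poly_gt0 p; have := size_poly_gt0 q; rewrite p0 q0 => sq sp.
set a := size p in sp *; set b := size q in sq *.
have ltp : (a.-1 < (a + b).-2.+1)%N by lia.
rewrite (bigD1 (Ordinal ltp)) //= big1 ?addr0.
  have -> : ((a + b).-2 - a.-1 = b.-1)%N by lia.
  by rewrite mulf_neq0 // ?iter_rmorph_eq0 -lead_coefE lead_coef_eq0.
move=> i /eqP neq_i; case: (ltnP i a.-1) => [lti|lei].
  by rewrite (@nth_default _ _ q) ?iter_rmorph0 ?mulr0 //; have := ltn_ord i; lia.
rewrite nth_default ?mul0r //.
suff : (i : nat) <> a.-1 by rewrite -/a; lia.
by move=> eq_i; apply: neq_i; apply: val_inj.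
Qed.

Lemma skew_unitC c : c != 0 -> skew_unit sigma c%:P.
Proof. by move=> c0; exists c^-1%:P; rewrite !skew_mulC mulfV ?mulVf. Qed.

Lemma skew_irreducible_size (f : {poly K}) : (1 < size f)%N ->
  (forall g h : {poly K}, (1 < size g < size f)%N -> (1 < size h < size f)%N ->
     skew_mul sigma g h != f) ->
  skew_irreducible sigma f.
Proof.
move=> f_gt1 no_factor; have f0 : f != 0 by rewrite -size_poly_gt0; lia.
split.
  case=> q [fq1 _]; have q0 : q != 0.
    by apply: contra_eq_neq fq1 => ->; rewrite skew_mul0r eq_sym oner_neq0.
  have := congr1 (fun p : {poly K} => size p) fq1.
  rewrite size_skew_mul // size_poly1.
  by have := size_poly_gt0 q; rewrite q0; lia.
move=> g h fgh.
have g0 : g != 0 by apply: contraNneq f0 => g0; rewrite fgh g0 skew_mul0l.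
have h0 : h != 0 by apply: contraNneq f0 => h0; rewrite fgh h0 skew_mul0r.
have := size_poly_gt0 g; have := size_poly_gt0 h; rewrite g0 h0 => sh sg.
case: (leqP (size g) 1) => [g_le1|g_gt1].
  left; rewrite (size1_polyC g_le1); apply: skew_unitC.
  by rewrite -polyC_eq0 -size1_polyC.
case: (leqP (size h) 1) => [h_le1|h_gt1].
  right; rewrite (size1_polyC h_le1); apply: skew_unitC.
  by rewrite -polyC_eq0 -size1_polyC.
have := congr1 (fun p : {poly K} => size p) fgh; rewrite size_skew_mul // => size_f.
have size_g : (1 < size g < size f)%N by lia.
have size_h : (1 < size h < size f)%N by lia.
by have := no_factor g h size_g size_h; rewrite -fgh eqxx.
Qed.

Lemma skew_rmodP m d (P : {poly K}) : (0 < m)%N -> (size P <= m + m)%N ->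
  is_rrem sigma ('X^m - d%:P) P (skew_rmod sigma m d P).
Proof.
move=> m_gt0 size_P; split; first by rewrite size_XnsubC // ltnS size_poly.
exists (\poly_(k < m) P`_(k + m)); apply/polyP => k.
have -> : 'X^m - d%:P = 1 *: 'X^m + - (d *: 'X^0) by rewrite scale1r expr0 alg_polyC.
rewrite skew_mulDr skew_mulNr !coefD coefN !coef_skew_mulZXn iter_rmorph1 mulr1 subn0.
rewrite !coef_poly leq0n; case: (ltnP k m) => [ltkm|lemk].
  by rewrite add0r addrC addrK.
rewrite subnK // mul0r subr0 addr0.
by case: ltnP => // lekm2; rewrite nth_default //; apply: leq_trans size_P _; lia.
Qed.

End TwistedPolynomials.

Lemma linear_coords_inj_bij (L : fieldType) (vT : vectType L) (X : Type)
    (f : X -> X) (c : X -> vT) (c' : vT -> X) :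
  cancel c c' -> cancel c' c -> linear (c \o f \o c') -> injective f -> bijective f.
Proof.
move=> cK c'K lin_g inj_f.
pose g : {linear vT -> vT} := HB.pack (c \o f \o c') (GRing.isLinear.Build _ _ _ _ _ lin_g).
have ker_g : lker (linfun g) == 0%VS.
  by apply/lker0P => u v; rewrite !lfunE /= => /(can_inj cK)/inj_f/(can_inj c'K).
have g_c x : linfun g (c x) = c (f x) by rewrite lfunE /= cK.
exists (c' \o (linfun g)^-1%VF \o c) => [x|y] /=; first by rewrite -g_c lker0_lfunK.
by apply: (can_inj cK); rewrite -g_c c'K lker0_lfunVK.
Qed.

Section NonassociativeRing.
Variables (S : zmodType) (mul : S -> S -> S) (one : S).
Hypothesis HS : naring mul one.

Lemma namulDl x y z : mul (x + y) z = mul x z + mul y z. Proof. by case: HS. Qed.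
Lemma namulDr x y z : mul x (y + z) = mul x y + mul x z. Proof. by case: HS. Qed.
Lemma namul1l x : mul one x = x. Proof. by case: HS. Qed.
Lemma namul1r x : mul x one = x. Proof. by case: HS. Qed.

Lemma namul0l x : mul 0 x = 0.
Proof. by apply: (@addrI _ (mul 0 x)); rewrite -namulDl !addr0. Qed.

Lemma namul0r x : mul x 0 = 0.
Proof. by apply: (@addrI _ (mul x 0)); rewrite -namulDr !addr0. Qed.

Lemma namulNr x y : mul x (- y) = - mul x y.
Proof. by apply/eqP; rewrite -addr_eq0 -namulDr addNr namul0r. Qed.

Lemma rdiv_mulf_eq0 : right_division_ring mul ->
  forall x y, (mul x y == 0) = (x == 0) || (y == 0).
Proof.
case=> _ rdiv x y; have [->|y0] := eqVneq y 0; first by rewrite namul0r eqxx orbT.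
have [g gK _] := rdiv y y0; rewrite orbF.
apply/eqP/eqP => [xy0|->]; last exact: namul0l.
by apply: (can_inj gK); rewrite /= xy0 namul0l.
Qed.

Lemma rdiv_lmul_inj a : right_division_ring mul -> a != 0 -> injective (mul a).
Proof.
move=> rdiv a0 x y axy; apply/eqP; rewrite -subr_eq0.
have := rdiv_mulf_eq0 rdiv a (x - y).
by rewrite namulDr namulNr axy subrr eqxx (negPf a0).
Qed.

Section KSubring.
Variables (K : fieldType) (iota : K -> S).
Hypotheses (HK : subring_embedding mul one iota) (HKsp : left_K_space mul iota).

Lemma iota_inj : injective iota. Proof. by case: HK. Qed.
Lemma iotaD a b : iota (a + b) = iota a + iota b. Proof. by case: HK. Qed.
Lemma iota1 : iota 1 = one. Proof. by case: HK. Qed.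
Lemma iotaM a b : iota (a * b) = mul (iota a) (iota b). Proof. by case: HK. Qed.

Lemma iota0 : iota 0 = 0.
Proof. by apply: (@addrI _ (iota 0)); rewrite -iotaD !addr0. Qed.

Section Coordinates.
Variables (m : nat) (b : 'I_m -> S).
Hypothesis Hb : is_Kbasis mul iota b.

Definition of_coefs (c : {ffun 'I_m -> K}) : S := \sum_(i < m) mul (iota (c i)) (b i).

Lemma of_coefs_inj : injective of_coefs.
Proof.
move=> c c' eq_cc'; have [c0 [_ uniq_c0]] := Hb (of_coefs c).
by rewrite -(uniq_c0 c) // -(uniq_c0 c') // eq_cc'.
Qed.

Lemma coefs_exists x : exists c, x == of_coefs c.
Proof. by have [c [/eqP x_c _]] := Hb x; exists c. Qed.

Definition coefs (x : S) : {ffun 'I_m -> K} := xchoose (coefs_exists x).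

Lemma coefsK : cancel coefs of_coefs.
Proof. by move=> x; apply/esym/eqP; exact: (xchooseP (coefs_exists x)). Qed.

Lemma of_coefsK : cancel of_coefs coefs.
Proof. by move=> c; apply: of_coefs_inj; rewrite coefsK. Qed.

Lemma of_coefsD : {morph of_coefs : c c' / c + c'}.
Proof.
by move=> c c'; rewrite -big_split; apply: eq_bigr => i _; rewrite ffunE iotaD namulDl.
Qed.

Lemma coefsD : {morph coefs : x y / x + y}.
Proof. by move=> x y; apply: of_coefs_inj; rewrite of_coefsD !coefsK. Qed.

Lemma of_coefsZ a (c : {ffun 'I_m -> K}) :
  of_coefs [ffun i => a * c i] = mul (iota a) (of_coefs c).
Proof.
rewrite [RHS](big_morph (mul (iota a)) (namulDr (iota a)) (namul0r _)).
by apply: eq_bigr => i _; rewrite ffunE HKsp.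
Qed.

Lemma coefsZ a x : coefs (mul (iota a) x) = [ffun i => a * coefs x i].
Proof. by apply: of_coefs_inj; rewrite of_coefsZ !coefsK. Qed.

Lemma coefs_basis a i :
  coefs (mul (iota a) (b i)) = [ffun j => if j == i then a else 0].
Proof.
apply: of_coefs_inj; rewrite coefsK /of_coefs (bigD1 i) //= big1 => [|j /negPf ji].
  by rewrite ffunE eqxx addr0.
by rewrite ffunE ji iota0 namul0l.
Qed.

Lemma basis_scale_inj i : injective (fun a => mul (iota a) (b i)).
Proof.
move=> a a' /(congr1 coefs); rewrite !coefs_basis => /ffunP/(_ i).
by rewrite !ffunE eqxx.
Qed.

Lemma additive_eq_basis (V : zmodType) (f g : S -> V) :
    {morph f : x y / x + y} -> {morph g : x y / x + y} ->
    (forall a i, f (mul (iota a) (b i)) = g (mul (iota a) (b i))) -> f =1 g.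
Proof.
move=> fD gD fg x; rewrite -(coefsK x).
have f0 : f 0 = 0 by apply: (@addrI _ (f 0)); rewrite -fD !addr0.
have g0 : g 0 = 0 by apply: (@addrI _ (g 0)); rewrite -gD !addr0.
rewrite (big_morph f fD f0) (big_morph g gD g0).
by apply: eq_bigr => i _; apply: fg.
Qed.

Lemma biadditive_eq_basis (V : zmodType) (f g : S -> S -> V) :
    (forall y, {morph f^~ y : x x' / x + x'}) -> (forall x, {morph f x : y y' / y + y'}) ->
    (forall y, {morph g^~ y : x x' / x + x'}) -> (forall x, {morph g x : y y' / y + y'}) ->
    (forall a a' i j, f (mul (iota a) (b i)) (mul (iota a') (b j)) =
                      g (mul (iota a) (b i)) (mul (iota a') (b j))) ->
  forall x y, f x y = g x y.
Proof.
move=> fDl fDr gDl gDr fg x y.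
apply: (additive_eq_basis (fDl y) (gDl y)) => a i.
exact: (additive_eq_basis (fDr _) (gDr _)).
Qed.

Definition to_poly (x : S) : {poly K} := Poly (fgraph (coefs x)).
Definition of_poly (p : {poly K}) : S := of_coefs [ffun i : 'I_m => p`_i].

Lemma size_to_poly x : (size (to_poly x) <= m)%N.
Proof. by rewrite (leq_trans (size_Poly _)) // size_tuple card_ord. Qed.

Lemma coef_to_poly x (i : 'I_m) : (to_poly x)`_i = coefs x i.
Proof. by rewrite coef_Poly nth_fgraph_ord. Qed.

Lemma to_polyP x (p : {poly K}) :
  (size p <= m)%N -> (forall i : 'I_m, p`_i = coefs x i) -> to_poly x = p.
Proof.
move=> size_p coefs_p; apply/polyP => k; case: (ltnP k m) => [ltkm|lemk].
  by rewrite -[k]/(val (Ordinal ltkm)) coef_to_poly coefs_p.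
by rewrite !nth_default // (leq_trans _ lemk) ?size_to_poly.
Qed.

Lemma to_polyK : cancel to_poly of_poly.
Proof.
move=> x; rewrite /of_poly -[RHS]coefsK; congr of_coefs.
by apply/ffunP => i; rewrite ffunE coef_to_poly.
Qed.

Lemma to_poly_inj : injective to_poly.
Proof. exact: can_inj to_polyK. Qed.

Lemma of_polyK (p : {poly K}) : (size p <= m)%N -> to_poly (of_poly p) = p.
Proof. by move=> size_p; apply: to_polyP => // i; rewrite of_coefsK ffunE. Qed.

Lemma to_polyD : {morph to_poly : x y / x + y}.
Proof.
move=> x y; apply: to_polyP => [|i].
  by rewrite (leq_trans (size_polyD _ _)) // geq_max !size_to_poly.
by rewrite coefD !coef_to_poly coefsD ffunE.
Qed.

Lemma to_poly0 : to_poly 0 = 0.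
Proof. by apply: (@addrI _ (to_poly 0)); rewrite -to_polyD !addr0. Qed.

Lemma to_poly_basis a i : to_poly (mul (iota a) (b i)) = a *: 'X^i.
Proof.
apply: to_polyP => [|j]; first by rewrite (leq_trans (size_scale_leq _ _)) // size_polyXn.
rewrite coefs_basis coefZ coefXn ffunE -(inj_eq val_inj) /=.
by case: eqP; rewrite ?mulr1 ?mulr0.
Qed.

Lemma basis_size_gt0 : (0 < m)%N.
Proof.
case: m b Hb => // b0 Hb0; have [c [one_c _]] := Hb0 one.
by move: one_c; rewrite big_ord0 -iota1 -iota0 => /iota_inj/eqP; rewrite oner_eq0.
Qed.

Definition twist (om : K) (x : S) : S :=
  of_coefs [ffun i : 'I_m => om ^+ i * coefs x i].

Lemma twistD om : {morph twist om : x y / x + y}.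
Proof.
move=> x y; rewrite /twist -of_coefsD coefsD; congr of_coefs.
by apply/ffunP => i; rewrite !ffunE mulrDr.
Qed.

Lemma twist_twist om om' x : twist om (twist om' x) = twist (om * om') x.
Proof.
rewrite /twist of_coefsK; congr of_coefs.
by apply/ffunP => i; rewrite !ffunE mulrA exprMn mulrC.
Qed.

Lemma twist1 x : twist 1 x = x.
Proof.
rewrite /twist -[RHS]coefsK; congr of_coefs.
by apply/ffunP => i; rewrite ffunE expr1n mul1r.
Qed.

Lemma iter_twist om k x : iter k (twist om) x = twist (om ^+ k) x.
Proof. by elim: k => [|k IH]; rewrite ?twist1 // iterS IH twist_twist exprS. Qed.

Lemma twist_bij om : om != 0 -> bijective (twist om).
Proof.
by move=> om0; exists (twist om^-1) => x; rewrite twist_twist ?mulVf ?mulfV ?twist1.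
Qed.

Lemma twist_basis om a i :
  twist om (mul (iota a) (b i)) = mul (iota (om ^+ i * a)) (b i).
Proof.
rewrite /twist coefs_basis -[RHS]coefsK coefs_basis; congr of_coefs.
by apply/ffunP => j; rewrite !ffunE; case: eqP => [->|]; rewrite ?mulr0.
Qed.

End Coordinates.

Section CyclicAlgebra.
Variables (m' : nat) (t : S) (d : K) (sigma : K -> K).
Local Notation m := m'.+1.
Local Notation T := (tpow mul one t).
Hypothesis Hbasis : is_Kbasis mul iota (fun i : 'I_m => T i).
Hypothesis Hassoc : forall (a b c : K) (i j k : nat), (i + j < m)%N -> (k < m)%N ->
  nassoc mul (mul (iota a) (T i)) (mul (iota b) (T j)) (mul (iota c) (T k)) = 0.
Hypothesis tpow_m : T m = iota d.
Hypothesis t_iota : forall a, mul t (iota a) = mul (iota (sigma a)) t.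
Hypothesis sigma_order : forall a, iter m sigma a = a.

Local Notation of_coefs := (of_coefs (fun i : 'I_m => T i)).
Local Notation of_poly := (of_poly (fun i : 'I_m => T i)).
Local Notation coefs := (coefs Hbasis).
Local Notation to_poly := (to_poly Hbasis).
Local Notation twist := (twist Hbasis).

Definition mon a n := mul (iota a) (T n).

Lemma tpowS n : T n.+1 = mul t (T n). Proof. by []. Qed.
Lemma tpow1 : T 1 = t. Proof. exact: namul1r. Qed.
Lemma mon1 n : mon 1 n = T n. Proof. by rewrite /mon iota1 namul1l. Qed.
Lemma mon_deg0 a : mon a 0 = iota a. Proof. exact: namul1r. Qed.

Lemma monD a b n : mon (a + b) n = mon a n + mon b n.
Proof. by rewrite /mon iotaD namulDl. Qed.

Lemma iota_mul_mon a b n : mul (iota a) (mon b n) = mon (a * b) n.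
Proof. by rewrite /mon HKsp. Qed.

Lemma mon_assoc a b c i j k : (i + j < m)%N -> (k < m)%N ->
  mul (mul (mon a i) (mon b j)) (mon c k) = mul (mon a i) (mul (mon b j) (mon c k)).
Proof. by move=> ltijm ltkm; apply/eqP; rewrite -subr_eq0; apply/eqP; apply: Hassoc. Qed.

Lemma mul_t_mon c n : (n.+1 < m)%N -> mul t (mon c n) = mon (sigma c) n.+1.
Proof.
move=> ltnm; have := mon_assoc 1 c 1 (i := 1) (j := 0) (k := n) ltac:(lia) ltac:(lia).
rewrite !mon1 mon_deg0 tpow1 -/(mon c n) => <-.
have := mon_assoc (sigma c) 1 1 (i := 0) (j := 1) (k := n) ltac:(lia) ltac:(lia).
by rewrite !mon1 mon_deg0 tpow1 t_iota => ->.
Qed.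

Lemma mul_tpow_iota b i : (i < m)%N -> mul (T i) (iota b) = mon (iter i sigma b) i.
Proof.
elim: i => [|i IH] ltim; first by rewrite namul1l mon_deg0.
have := mon_assoc 1 1 b (i := 1) (j := i) (k := 0) ltim isT.
rewrite !mon1 mon_deg0 tpow1 tpowS => ->.
by rewrite IH ?(ltnW ltim) // mul_t_mon // iterS.
Qed.

Lemma mul_tpow i j : (i < m)%N -> (j < m)%N -> mul (T i) (T j) = T (i + j).
Proof.
elim: i => [|i IH] ltim ltjm; first by rewrite namul1l.
have := mon_assoc 1 1 1 (i := 1) (j := i) (k := j) ltim ltjm.
by rewrite !mon1 tpow1 tpowS => ->; rewrite IH ?(ltnW ltim) // addSn.
Qed.

Lemma tpow_wrap n : (n < m)%N -> T (n + m) = mon (iter n sigma d) n.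
Proof.
elim: n => [|n IH] ltnm; first by rewrite mon_deg0.
by rewrite addSn tpowS IH ?(ltnW ltnm) // mul_t_mon.
Qed.

Lemma mon_wrap c n : (n < m)%N -> mon c (n + m) = mon (c * iter n sigma d) n.
Proof. by move=> ltnm; rewrite /mon tpow_wrap // iota_mul_mon. Qed.

Lemma mul_mon a b i j : (i < m)%N -> (j < m)%N ->
  mul (mon a i) (mon b j) = mon (a * iter i sigma b) (i + j).
Proof.
move=> ltim ltjm.
have := mon_assoc a b 1 (i := i) (j := 0) (k := j) ltac:(lia) ltjm.
rewrite mon_deg0 mon1 -/(mon b j) => <-.
have := mon_assoc a 1 b (i := 0) (j := i) (k := 0) ltim isT.
rewrite !mon_deg0 mon1 -/(mon a i) => ->.
rewrite mul_tpow_iota // iota_mul_mon.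
have := mon_assoc (a * iter i sigma b) 1 1 (i := 0) (j := i) (k := j) ltim ltjm.
by rewrite mon_deg0 !mon1 -/(mon _ i) => ->; rewrite mul_tpow.
Qed.

Lemma mul_t_iota a : mul t (iota a) = mon (sigma a) 1.
Proof. by rewrite t_iota /mon tpow1. Qed.

Lemma mon_inj n : (n < m)%N -> injective (mon^~ n).
Proof. by move=> ltnm; apply: (basis_scale_inj Hbasis (i := Ordinal ltnm)). Qed.

Lemma sigma_deg1 : m' = 0%N -> sigma =1 id.
Proof. by move=> m'0 a; have := sigma_order a; rewrite m'0. Qed.

Lemma sigmaD : {morph sigma : a b / a + b}.
Proof.
move=> a b; have [/sigma_deg1 id_sigma|m'_gt0] := posnP m'; first by rewrite !id_sigma.
by apply: (@mon_inj 1); rewrite // monD -!mul_t_iota iotaD namulDr.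
Qed.

Lemma sigma0 : sigma 0 = 0.
Proof. by apply: (@addrI _ (sigma 0)); rewrite -sigmaD !addr0. Qed.

Lemma sigmaM : {morph sigma : a b / a * b}.
Proof.
move=> a b; have [/sigma_deg1 id_sigma|m'_gt0] := posnP m'; first by rewrite !id_sigma.
apply: (@mon_inj 1) => //; rewrite -mul_t_iota iotaM.
have := mon_assoc 1 a b (i := 1) (j := 0) (k := 0) m'_gt0 isT.
by rewrite mon1 !mon_deg0 tpow1 => <-; rewrite mul_t_iota -(mon_deg0 b) mul_mon.
Qed.

Lemma sigma1 : sigma 1 = 1.
Proof.
have [/sigma_deg1 -> //|m'_gt0] := posnP m'.
by apply: (@mon_inj 1) => //; rewrite -mul_t_iota iota1 namul1r mon1 tpow1.
Qed.

(* From here on sigma is a canonical {rmorphism K -> K}, so the lemmas on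
   twisted polynomials apply to skew_mul sigma. *)
HB.instance Definition _ := GRing.isNmodMorphism.Build K K sigma (sigma0, sigmaD).
HB.instance Definition _ := GRing.isMonoidMorphism.Build K K sigma (sigma1, sigmaM).

Lemma to_poly_mon a n : (n < m + m)%N ->
  to_poly (mon a n) = skew_rmod sigma m d (a *: 'X^n).
Proof.
move=> ltn2m; case: (ltnP n m) => [ltnm|lemn].
  by rewrite skew_rmodZXn //; apply: (to_poly_basis Hbasis a (Ordinal ltnm)).
have ltk : (n - m < m)%N by lia.
rewrite -(subnK lemn) mon_wrap // skew_rmodZXnm //.
exact: (to_poly_basis Hbasis _ (Ordinal ltk)).
Qed.

Lemma to_poly_mul x y :
  to_poly (mul x y) = skew_rmod sigma m d (skew_mul sigma (to_poly x) (to_poly y)).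
Proof.
apply: (biadditive_eq_basis Hbasis (f := fun x y => to_poly (mul x y))
  (g := fun x y => skew_rmod sigma m d (skew_mul sigma (to_poly x) (to_poly y))))
  => [z u v|z u v|z u v|z u v|a b i j] /=.
- by rewrite namulDl to_polyD.
- by rewrite namulDr to_polyD.
- by rewrite to_polyD skew_mulDl skew_rmodD.
- by rewrite to_polyD skew_mulDr skew_rmodD.
have [ltim ltjm] := (ltn_ord i, ltn_ord j).
rewrite -/(mon a i) -/(mon b j) mul_mon // to_poly_mon; last by lia.
by rewrite !(to_poly_basis Hbasis) skew_mulZXn.
Qed.

Lemma to_poly_iso : iso_to_Sf sigma m ('X^m - d%:P) mul one to_poly.
Proof.
split=> [x|||x y|]; first exact: size_to_poly.
- exact: (to_poly_inj (Hb := Hbasis)).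
- by move=> p size_p; exists (of_poly p); apply: of_polyK.
- exact: to_polyD.
split=> [|x y].
  by have := to_poly_basis Hbasis 1 ord0; rewrite iota1 namul1l scale1r.
rewrite to_poly_mul; apply: skew_rmodP => //.
rewrite /skew_mul (leq_trans (size_poly _ _)) //.
by have := size_to_poly Hbasis x; have := size_to_poly Hbasis y; lia.
Qed.

Lemma XnsubC_irreducible :
  right_division_ring mul -> skew_irreducible sigma ('X^m - d%:P).
Proof.
move=> rdiv; apply: skew_irreducible_size; first by rewrite size_XnsubC.
move=> g h; rewrite size_XnsubC // !ltnS => /andP[g_gt1 g_le] /andP[h_gt1 h_le].
apply/eqP => fgh; have : mul (of_poly g) (of_poly h) == 0.
  rewrite -(inj_eq (to_poly_inj (Hb := Hbasis))) to_poly_mul !of_polyK //.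
  by rewrite fgh skew_rmod_XnsubC // to_poly0.
rewrite rdiv_mulf_eq0 // -!(inj_eq (to_poly_inj (Hb := Hbasis))) to_poly0 !of_polyK //.
by rewrite -!size_poly_eq0 (gtn_eqF (ltnW g_gt1)) (gtn_eqF (ltnW h_gt1)).
Qed.

Lemma twist_mon om a n : om ^+ m = 1 -> (n < m + m)%N ->
  twist om (mon a n) = mon (om ^+ n * a) n.
Proof.
move=> om_m ltn2m; case: (ltnP n m) => [ltnm|lemn].
  exact: (twist_basis Hbasis om a (Ordinal ltnm)).
have ltk : (n - m < m)%N by lia.
rewrite -(subnK lemn) !mon_wrap // exprD om_m mulr1 -mulrA.
exact: (twist_basis Hbasis om _ (Ordinal ltk)).
Qed.

Lemma twist_mul om : sigma om = om -> om ^+ m = 1 ->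
  {morph twist om : x y / mul x y}.
Proof.
move=> sigma_om om_m x y.
apply: (biadditive_eq_basis Hbasis (f := fun x y => twist om (mul x y))
  (g := fun x y => mul (twist om x) (twist om y)))
  => [z u v|z u v|z u v|z u v|a b i j] /=.
- by rewrite namulDl twistD.
- by rewrite namulDr twistD.
- by rewrite twistD namulDl.
- by rewrite twistD namulDr.
have [ltim ltjm] := (ltn_ord i, ltn_ord j).
rewrite -/(mon a i) -/(mon b j) mul_mon // !twist_mon ?mul_mon //; try lia.
rewrite iter_rmorphM iter_rmorph_fix; last by rewrite rmorphXn /= sigma_om.
by rewrite exprD mulrACA.
Qed.

Lemma twist_iota om a : twist om (iota a) = iota a.
Proof. by have := twist_basis Hbasis om a ord0; rewrite /= expr0 mul1r !namul1r. Qed.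

Lemma twist_automorphism om : sigma om = om -> om ^+ m = 1 ->
  na_automorphism mul one (twist om).
Proof.
move=> sigma_om om_m; have om0 : om != 0.
  by apply: contra_eq_neq om_m => ->; rewrite expr0n eq_sym oner_neq0.
split; [exact: twist_bij | exact: twistD | exact: twist_mul |].
by have := twist_basis Hbasis om 1 ord0; rewrite /= expr0 mulr1 iota1 namul1l.
Qed.

Lemma twist_order om k : m.-primitive_root om -> (0 < k < m)%N ->
  iter k (twist om) (mon 1 1) != mon 1 1.
Proof.
move=> om_prim /andP[k_gt0 ltkm]; have lt1m : (1 < m)%N by lia.
have om_k_m : (om ^+ k) ^+ m = 1.
  by rewrite -exprM mulnC exprM (prim_expr_order om_prim) expr1n.
rewrite iter_twist twist_mon //; last by lia.
rewrite expr1 mulr1; apply/negP => /eqP/(mon_inj lt1m)/eqP.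
rewrite -(prim_order_dvd om_prim) => /(dvdn_leq k_gt0).
by rewrite leqNgt ltkm.
Qed.

Lemma mul_iota_fixed lam x y : sigma lam = lam ->
  mul x (mul (iota lam) y) = mul (iota lam) (mul x y).
Proof.
move=> sigma_lam.
apply: (biadditive_eq_basis Hbasis (f := fun x y => mul x (mul (iota lam) y))
  (g := fun x y => mul (iota lam) (mul x y)))
  => [z u v|z u v|z u v|z u v|a b i j] /=.
- by rewrite namulDl.
- by rewrite !namulDr.
- by rewrite namulDl namulDr.
- by rewrite !namulDr.
rewrite -/(mon a i) -/(mon b j) iota_mul_mon !mul_mon // iota_mul_mon.
by rewrite iter_rmorphM iter_rmorph_fix // mulrCA.
Qed.

Lemma coefs_mul_fixed a lam (c : {ffun 'I_m -> K}) : sigma lam = lam ->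
  coefs (mul a (of_coefs [ffun i => lam * c i])) =
    [ffun i => lam * coefs (mul a (of_coefs c)) i].
Proof. by move=> sigma_lam; rewrite of_coefsZ mul_iota_fixed // coefsZ. Qed.

End CyclicAlgebra.

End KSubring.

End NonassociativeRing.

Theorem theorem4p2
  (F0 : fieldType) (K : splittingFieldType F0) (F : {subfield K})
  (S : zmodType) (mul : S -> S -> S) (one : S) (iota : K -> S) (m : nat)
  (t : S) (d : K) (sigma : K -> K)
  (HS : naring mul one)
  (HK : subring_embedding mul one iota)
  (HKsp : left_K_space mul iota)
  (Hfree : free_of_rank mul iota m)
  (* (1) *)
  (H1 : is_Kbasis mul iota (fun i : 'I_m => tpow mul one t i))
  (* (2) *)
  (H2 : forall a : K, a != 0 ->
          exists a' : K, a' != 0 /\ mul t (iota a) = mul (iota a') t)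
  (* (3) *)
  (H3 : forall (a b c : K) (i j k : nat), (i + j < m)%N -> (k < m)%N ->
          nassoc mul (mul (iota a) (tpow mul one t i))
                     (mul (iota b) (tpow mul one t j))
                     (mul (iota c) (tpow mul one t k)) = 0)
  (* (4) *)
  (H4d : d != 0) (H4 : tpow mul one t m = iota d)
  (* (5) the map sigma : a |-> a' (sigma 0 = 0) *)
  (Hsigma : forall a : K, mul t (iota a) = mul (iota (sigma a)) t)
  (Hsig_ord : (forall a, iter m sigma a = a) /\
              forall k, (0 < k < m)%N -> exists a, iter k sigma a != a)
  (HFfix : forall a : K, (a \in F) = (sigma a == a))
  (HFcomm : forall a : K, a \in F <-> mul t (iota a) = mul (iota a) t)
  (Homega : exists omega : K, omega \in F /\ m.-primitive_root omega)
  (Hgal : galois F {:K} /\ cyclic 'Gal({:K} / F)) :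
  let f := 'X^m - d%:P in
  (exists phi : S -> {poly K}, iso_to_Sf sigma m f mul one phi) /\
  (right_division_ring mul ->
     skew_irreducible sigma f /\
     (exists phi : S -> {poly K}, iso_to_Sf sigma m f mul one phi) /\
     na_cyclic_extension mul one iota m).
Proof.
have := basis_size_gt0 HK H1.
case: m => // m' in Hfree H1 H3 H4 Hsig_ord Homega * => _ f.
have [[sigma_order _] [om [om_F om_prim]]] := (Hsig_ord, Homega).
have sigma_F a : a \in F -> sigma a = a by rewrite HFfix => /eqP.
have iso := to_poly_iso HS HK HKsp H1 H3 H4 Hsigma sigma_order.
split=> [|rdiv]; first by exists (to_poly H1).
(* Left multiplication is linear over F0, whose image in K is fixed by sigma. *)
have lmul_bij a : a != 0 -> bijective (mul a).
  move=> a0; apply: (linear_coords_inj_bij (coefsK H1) (of_coefsK H1));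
    last exact: (rdiv_lmul_inj HS rdiv a0).
  move=> k u v /=; have sigma_k : sigma k%:A = k%:A.
    by apply: sigma_F; apply: memvZ; apply: mem1v.
  have -> : k *: u = [ffun i => k%:A * u i] by apply/ffunP => i; rewrite !ffunE mulr_algl.
  rewrite (of_coefsD HS HK) (namulDr HS) (coefsD HS HK H1).
  rewrite (coefs_mul_fixed HS HK HKsp H1 H3 Hsigma sigma_order) //.
  by congr (_ + _); apply/ffunP => i; rewrite !ffunE mulr_algl.
split; first exact: (XnsubC_irreducible HS HK HKsp H1 H3 H4 Hsigma sigma_order rdiv).
split; first by exists (to_poly H1).
split=> //; first by case: rdiv.
  by move=> a a0; split; [exact: lmul_bij | case: rdiv => _ /(_ a a0)].
have om_m := prim_expr_order om_prim.
exists (twist H1 om); split.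
- exact: (twist_automorphism HS HK HKsp H1 H3 H4 Hsigma sigma_order (sigma_F om om_F) om_m).
- exact: (twist_iota HS HK).
- by move=> x; rewrite iter_twist om_m twist1.
- move=> k k_bounds; eexists.
  exact: (twist_order HS HK HKsp H1 H3 H4 Hsigma om_prim k_bounds).
Qed.
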